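(* Let $V = W_0 \oplus W \oplus W_1$ be a finite-dimensional real vector space written as a direct sum of subspaces with $W \neq \{0\}$, and let $V_0 = W_0 + W$, $V_1 = W + W_1$. Let $\Gamma_0, \Gamma_1 \leq \operatorname{GL}(V)$ be groups such that for $i = 0,1$: (1) $\Gamma_i V_i = V_i$ and the representation of $\Gamma_i$ on $V_i$ is irreducible; (2) $\Gamma_i$ acts trivially on $W_{1-i}$, i.e. $\gamma w = w$ for all $\gamma \in \Gamma_i$ and $w \in W_{1-i}$. Then the action of the group $\Gamma = \langle \Gamma_0 \cup \Gamma_1 \rangle$ on $V$ is irreducible. *)

From HB Require Import structures.
From mathcomp Require Import all_boot all_order all_algebra.
Set Implicit Arguments. Unset Strict Implicit. Unset Printing Implicit Defensive.
Import Order.TTheory GRing.Theory Num.Theory.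
Local Open Scope ring_scope.

(* V = 'rV[R]_n (row vectors); a matrix g : 'M[R]_n acts on v by v *m g.
   Subspaces of V are represented by matrices via their row space (mxalgebra). *)

Definition subgroupGL (R : fieldType) (n : nat) (G : 'M[R]_n -> Prop) : Prop :=
  [/\ G 1%:M,
      (forall g h, G g -> G h -> G (g *m h)) &
      (forall g, G g -> g \in unitmx /\ G (invmx g))].

Inductive gen_group (R : fieldType) (n : nat) (A B : 'M[R]_n -> Prop)
  : 'M[R]_n -> Prop :=
  | gen_inl g : A g -> gen_group A B g
  | gen_inr g : B g -> gen_group A B g
  | gen_one : gen_group A B 1%:M
  | gen_mul g h : gen_group A B g -> gen_group A B h -> gen_group A B (g *m h)
  | gen_inv g : gen_group A B g -> gen_group A B (invmx g).

Definition irreducible_on (R : fieldType) (n : nat) (G : 'M[R]_n -> Prop)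
  (U : 'M[R]_n) : Prop :=
  U != 0 /\
  forall X : 'M[R]_n, (X <= U)%MS ->
    (forall g, G g -> (X *m g <= X)%MS) ->
    X = 0 \/ (X == U)%MS.

From HB Require Import structures.
From mathcomp Require Import all_boot all_order all_algebra.
Import Order.TTheory GRing.Theory Num.Theory.
Local Open Scope ring_scope.

(* Let X be a nonzero Gamma-invariant subspace. By irreducibility, X meets
   V_i either trivially or contains it; as W lies in V_0 and V_1, X either
   contains V_0 + V_1 = V or meets both V_i trivially. In the latter case
   write x in X as p + c with p in V_0 and c in W_1. Since Gamma_0 fixes c and
   X meets V_0 trivially, p is Gamma_0-fixed, so its line is a Gamma_0-invariant
   subspace of V_0: either p = 0 or the line is all of V_0, which then equals W.
   Both ways x lies in W + W_1 = V_1, hence x = 0. *)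

Section InvariantSubspaces.

Set Implicit Arguments.
Unset Strict Implicit.

Variables (F : fieldType) (n : nat) (G : 'M[F]_n -> Prop).
Implicit Types (V X : 'M[F]_n) (p x : 'rV[F]_n).

Lemma stablemx_cap V X g :
  stablemx V g -> stablemx X g -> stablemx (X :&: V)%MS g.
Proof.
move=> stV stX; rewrite sub_capmx.
by rewrite (submx_trans (submxMr _ (capmxSl _ _)) stX)
           (submx_trans (submxMr _ (capmxSr _ _)) stV).
Qed.

Lemma irreducible_cap_dichotomy V X :
  irreducible_on G V ->
  (forall g, G g -> stablemx V g) -> (forall g, G g -> stablemx X g) ->
  (X :&: V)%MS = 0 \/ (V <= X)%MS.
Proof.
move=> [_ irrV] stV stX.
have stXV g : G g -> stablemx (X :&: V)%MS g.
  by move=> Gg; apply: stablemx_cap; [apply: stV | apply: stX].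
case: (irrV _ (capmxSr _ _) stXV) => [-> | /andP[_ sVXV]]; first by left.
by right; apply: submx_trans sVXV (capmxSl _ _).
Qed.

Lemma irreducible_fixed_row V p :
  irreducible_on G V -> (p <= V)%MS -> (forall g, G g -> p *m g = p) ->
  p = 0 \/ (V <= p)%MS.
Proof.
move=> [_ irrV] pV pfix.
have stp g : G g -> stablemx <<p>>%MS g.
  by move=> Gg; rewrite (eqmxMr _ (genmxE p)) genmxE pfix.
have genpV : (<<p>> <= V)%MS by rewrite genmxE.
have [p0 | /andP[_ Vp]] := irrV _ genpV stp.
  by left; apply/eqP; rewrite -submx0 -genmxE p0 sub0mx.
by right; rewrite genmxE in Vp.
Qed.

Lemma row_sub_of_nz_sub (k : nat) (W : 'M[F]_(k, n)) p :
  W != 0 -> (W <= p)%MS -> (p <= W)%MS.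
Proof.
move=> W_nz Wp; rewrite -(mxrank_leqif_sup Wp).2 eqn_leq (mxrankS Wp).
by rewrite (leq_trans (rank_leq_row p)) // lt0n mxrank_eq0.
Qed.

Lemma fixed_component_of_invariant (m : nat) V (U : 'M[F]_(m, n)) X x p c :
  (forall g, G g -> stablemx V g) -> (forall g, G g -> stablemx X g) ->
  (forall g, G g -> forall w : 'rV_n, (w <= U)%MS -> w *m g = w) ->
  (X :&: V)%MS = 0 -> (x <= X)%MS -> x = p + c -> (p <= V)%MS -> (c <= U)%MS ->
  forall g, G g -> p *m g = p.
Proof.
move=> stV stX fixU XV0 xX xE pV cU g Gg.
have cfix : c *m g = c by apply: fixU.
have dpE : p *m g - p = x *m g - x.
  by rewrite xE mulmxDl cfix opprD addrACA subrr addr0.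
apply/eqP; rewrite -subr_eq0 -submx0 -XV0 sub_capmx; apply/andP; split.
  rewrite dpE addmx_sub ?eqmx_opp //.
  exact: submx_trans (submxMr _ xX) (stX g Gg).
by rewrite addmx_sub ?eqmx_opp // (submx_trans (submxMr _ pV) (stV g Gg)).
Qed.

Lemma invariant_eq0_of_caps_eq0 (k m : nat) V (W : 'M[F]_(k, n))
    (U : 'M[F]_(m, n)) X :
  (1%:M <= V + U)%MS -> W != 0 -> (W <= V)%MS ->
  irreducible_on G V -> (forall g, G g -> stablemx V g) ->
  (forall g, G g -> forall w : 'rV_n, (w <= U)%MS -> w *m g = w) ->
  (forall g, G g -> stablemx X g) ->
  (X :&: V)%MS = 0 -> (X :&: (W + U))%MS = 0 -> X = 0.
Proof.
move=> fullVU W_nz WV irrV stV fixU stX XV0 XWU0.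
apply/eqP; rewrite -submx0; apply/rV_subP => x xX.
have /sub_addsmxP[u xE] : (x <= V + U)%MS by apply: submx_trans (submx1 x) fullVU.
set p := u.1 *m V in xE; set c := u.2 *m U in xE.
have pV : (p <= V)%MS by apply: submxMl.
have pfix := fixed_component_of_invariant stV stX fixU XV0 xX xE pV (submxMl _ _).
have pW : (p <= W)%MS.
  case: (irreducible_fixed_row irrV pV pfix) => [-> | Vp]; first exact: sub0mx.
  exact: row_sub_of_nz_sub W_nz (submx_trans WV Vp).
by rewrite -XWU0 sub_capmx xX xE addmx_sub_adds ?submxMl.
Qed.

End InvariantSubspaces.

Theorem lemmaA4 (R : realFieldType) (n : nat) (W0 W W1 : 'M[R]_n)
  (G0 G1 : 'M[R]_n -> Prop) :
  mxdirect (W0 + W + W1) ->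
  (W0 + W + W1 == 1%:M)%MS ->
  W != 0 ->
  subgroupGL G0 -> subgroupGL G1 ->
  (forall g, G0 g -> ((W0 + W)%MS *m g == (W0 + W)%MS)%MS) ->
  (forall g, G1 g -> ((W + W1)%MS *m g == (W + W1)%MS)%MS) ->
  irreducible_on G0 (W0 + W)%MS ->
  irreducible_on G1 (W + W1)%MS ->
  (forall g, G0 g -> forall w : 'rV[R]_n, (w <= W1)%MS -> w *m g = w) ->
  (forall g, G1 g -> forall w : 'rV[R]_n, (w <= W0)%MS -> w *m g = w) ->
  irreducible_on (gen_group G0 G1) 1%:M.
Proof.
move=> _ /andP[_ full] W_nz _ _ eqV0 eqV1 irr0 irr1 fix0 _.
split; first by apply: contraNneq W_nz => one0; rewrite -[W]mulmx1 one0 mulmx0.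
move=> X _ stX.
have stX0 g : G0 g -> stablemx X g by move=> G0g; apply/stX/gen_inl.
have stX1 g : G1 g -> stablemx X g by move=> G1g; apply/stX/gen_inr.
have stV0 g : G0 g -> stablemx (W0 + W)%MS g by move=> /eqV0/andP[].
have stV1 g : G1 g -> stablemx (W + W1)%MS g by move=> /eqV1/andP[].
have W_notin (V : 'M_n) : (X :&: V)%MS = 0 -> (W <= V)%MS -> ~ (W <= X)%MS.
  by move=> XV0 WV WX; move: W_nz; rewrite -submx0 -XV0 sub_capmx WX WV.
have [XV0 | V0X] := irreducible_cap_dichotomy irr0 stV0 stX0;
  have [XV1 | V1X] := irreducible_cap_dichotomy irr1 stV1 stX1.
- by left; apply: invariant_eq0_of_caps_eq0 full W_nz (addsmxSr _ _)
    irr0 stV0 fix0 stX0 XV0 XV1.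
- by case: (W_notin _ XV0 (addsmxSr _ _)); apply: submx_trans V1X; apply: addsmxSl.
- by case: (W_notin _ XV1 (addsmxSl _ _)); apply: submx_trans V0X; apply: addsmxSr.
- right; rewrite /eqmx submx1 (submx_trans full) // addsmx_sub V0X.
  exact: submx_trans (addsmxSr _ _) V1X.
Qed.
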